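(* Let $K$ be a $d_1$-standard knot. Then the HOMFLY-PT $S$-invariant $S(K)$, and the rank of $d_1$ in each trigrading, are completely determined by the trigraded vector space $\mathcal{H}(K)$ (i.e. by the dimensions $\dim\mathcal{H}^{q,a,t}(K)$).
   Context: For a knot $K$, $\mathcal{H}(K)$ is reduced triply graded (HOMFLY-PT) Khovanov–Rozansky homology over $\mathbb{Q}$, a finite-dimensional space graded by even gradings $(q,a,t)$; $\Delta=q+a+t$. By Rasmussen, there is a spectral sequence with first page $\mathcal{H}(K)$ whose $i$-th differential $d_1^{(i)}$ changes degrees by $(q,a,t)\mapsto(q+2i,a-2i,t+2-2i)$, converging to a one-dimensional space supported in tridegree $(q,a,t)=(S,-S,-S)$ (hence in $\Delta$-grading $-S$); this integer $S=S(K)$ is the HOMFLY-PT $S$-invariant. Write $d_1=d_1^{(1)}$. $K$ is $d_1$-standard if $d_1^{(i)}=0$ for all $i\ge 2$. *)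

(* Abstract model of Rasmussen's HOMFLY-PT -> sl(1) spectral
   sequence attached to a knot, at the level of (finite-dimensional) graded
   vector spaces over Q and matrices representing the page differentials. *)
From mathcomp Require Import all_boot all_order all_algebra.
Set Implicit Arguments. Unset Strict Implicit. Unset Printing Implicit Defensive.
Import Order.TTheory GRing.Theory Num.Theory.
Local Open Scope ring_scope.

Definition tri := (int * int * int)%type.

Definition sh (i : nat) (g : tri) : tri :=
  let: (q, a, t) := g in (q + 2 * i%:Z, a - 2 * i%:Z, t + 2 - 2 * i%:Z).

Definition unsh (i : nat) (g : tri) : tri :=
  let: (q, a, t) := g in (q - 2 * i%:Z, a + 2 * i%:Z, t - 2 + 2 * i%:Z).

(* A spectral sequence of trigraded finite-dimensional Q-vector spaces:
   page i (i >= 1) in tridegree g is Q^(E i g) (row vectors), and the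
   differential d^(i) on page i from tridegree g is the matrix D i g
   (acting on row vectors by v |-> v *m D i g). *)
Record trigraded_ss := TrigradedSS {
  E : nat -> tri -> nat;
  D : forall (i : nat) (g : tri), 'M[rat]_(E i g, E i (sh i g))
}.

Definition finite_even_page1 (X : trigraded_ss) : Prop :=
  (exists B : int, forall q a t, (E X 1 (q, a, t) != 0)%N ->
       [/\ `|q| <= B, `|a| <= B & `|t| <= B]) /\
  (forall q a t, (E X 1 (q, a, t) != 0)%N ->
       [/\ ~~ odd `|q|%N, ~~ odd `|a|%N & ~~ odd `|t|%N]).

(* Page i+1 is (up to isomorphism of trigraded spaces, i.e.
   dimensionwise) the homology of (page i, d^(i)). *)
Definition HOMFLY_SS (X : trigraded_ss) (S : int) : Prop :=
  [/\ finite_even_page1 X,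
      (forall i g, (1 <= i)%N -> D X i g *m D X i (sh i g) = 0),
      (forall i g, (1 <= i)%N ->
          E X i.+1 g = (E X i g - \rank (D X i g) - \rank (D X i (unsh i g)))%N)
    & exists N : nat, forall k g, (N <= k)%N ->
          E X k g = nat_of_bool (g == (S, - S, - S))].

Definition d1_standard (X : trigraded_ss) : Prop :=
  forall i g, (2 <= i)%N -> D X i g = 0.

From mathcomp Require Import all_boot all_order all_algebra.
From mathcomp Require Import zify.
Import Order.TTheory GRing.Theory Num.Theory.
Local Open Scope ring_scope.

(* Since all higher differentials vanish, page 2 is already the limit, a
   single copy of Q in tridegree (S,-S,-S).  Hence in every tridegree g,
   dim H(g) = [g = (S,-S,-S)] + rk d_1(g) + rk d_1(g - (2,-2,0)), so along a
   line {(k, c - k, t)} the rank r(k) of d_1 solves the two-step recurrence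
   r(k) + r(k - 2) = dim H(k) - [(k, c - k, t) = (S,-S,-S)].  For two knots
   with the same H, the difference of their rank functions is finitely
   supported and solves the homogeneous recurrence except where the limit
   terms differ; a finitely supported solution with at most one defect is
   zero, and its defect is then zero too.  On the line {(k, -k, -S)} this
   rules out S <> S', and afterwards it gives equality of ranks on every
   line. *)

Lemma eq0_below (V : zmodType) (f : int -> V) (m k0 : int) :
  (forall k, k < m -> f k = 0) -> (forall k, k < k0 -> f k = - f (k - 2)) ->
  forall k, k < k0 -> f k = 0.
Proof.
move=> f_low f_step.
suff f0 (n : nat) k : k < k0 -> k < m + n%:Z -> f k = 0.
  by move=> k lt_k_k0; apply: (f0 `|k - m|.+1) => //; lia.
elim: n k => [|n IHn] k lt_k_k0 lt_k_mn; first by apply: f_low; lia.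
have [|le_mn_k] := ltrP k (m + n%:Z); first exact: IHn.
by rewrite f_step // IHn ?oppr0 //; lia.
Qed.

Lemma eq0_of_two_step (V : zmodType) (f : int -> V) (B k0 : int) :
  (forall k, B < `|k| -> f k = 0) -> (forall k, k != k0 -> f k + f (k - 2) = 0) ->
  forall k, f k = 0.
Proof.
move=> f_supp f_step k.
have step j : j != k0 -> f (j - 2) = - f j.
  by move/f_step/eqP; rewrite addrC addr_eq0 => /eqP.
have [lt_k_k0 | le_k0_k] := ltrP k k0.
  apply: (@eq0_below _ f (- B) k0) => // [j lt_j_B | j lt_j_k0].
    by apply: f_supp; lia.
  by rewrite step ?opprK //; apply/eqP; lia.
rewrite -[k]opprK.
apply: (@eq0_below _ (fun j => f (- j)) (- B) (2 - k0)) => /=;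
  [move=> j lt_j_B | move=> j lt_j_k0 | lia].
  by apply: f_supp; lia.
rewrite opprB addrC -[in LHS](addrK 2 (- j)) step ?opprK //.
by apply/eqP; lia.
Qed.

Definition conv_deg (S : int) : tri := (S, - S, - S).

Lemma unshK i : cancel (unsh i) (sh i).
Proof. by case=> [[q a] t]; rewrite /sh /unsh; congr (_, _, _); lia. Qed.

Lemma unsh1_line (c t k : int) : unsh 1 (k, c - k, t) = (k - 2, c - (k - 2), t).
Proof. by rewrite /unsh; congr (_, _, _); lia. Qed.

Lemma d1_standard_E2 {X S} g : HOMFLY_SS X S -> d1_standard X ->
  E X 2 g = (g == conv_deg S).
Proof.
case=> _ _ E_succ [N E_lim] d_hi.
suff E_stable n : E X (n + 2) g = E X 2 g by rewrite -(E_stable N) E_lim ?leq_addr.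
elim: n => // n IHn.
by rewrite addSn E_succ ?addn2 // !d_hi ?addn2 // !mxrank0 !subn0 -addn2.
Qed.

Lemma d1_standard_dim_E1 {X S} g : HOMFLY_SS X S -> d1_standard X ->
  E X 1 g = ((g == conv_deg S) + \rank (D X 1 g) + \rank (D X 1 (unsh 1 g)))%N.
Proof.
move=> HX d_hi; rewrite -(d1_standard_E2 g HX d_hi).
case: HX => _ D_sq E_succ _.
have := mulmx0_rank_max (D_sq 1%N (unsh 1 g) isT).
set r_in := \rank (D X 1 (unsh 1 g)); rewrite unshK => rank_le.
by rewrite (E_succ 1%N g) //; lia.
Qed.

Section Comparison.

Variables (X Y : trigraded_ss) (S1 S2 : int).
Hypotheses (HX : HOMFLY_SS X S1) (HY : HOMFLY_SS Y S2).
Hypotheses (dX : d1_standard X) (dY : d1_standard Y).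
Hypothesis E1_eq : forall g, E X 1 g = E Y 1 g.

Let rank_gap g : int := (\rank (D X 1 g))%:Z - (\rank (D Y 1 g))%:Z.

Let rank_gap_step g : rank_gap g + rank_gap (unsh 1 g) =
  (g == conv_deg S2 : nat)%:Z - (g == conv_deg S1 : nat)%:Z.
Proof.
have := E1_eq g; rewrite (d1_standard_dim_E1 g HX dX) (d1_standard_dim_E1 g HY dY).
by rewrite /rank_gap; lia.
Qed.

Let rank_gap_bounded : exists B, forall q a t, B < `|q| -> rank_gap (q, a, t) = 0.
Proof.
have [[[B E1_supp] _] _ _ _] := HX; exists B => q a t lt_B_q.
have E0 : E X 1 (q, a, t) = 0%N.
  by apply/eqP; apply: contraT => /E1_supp[le_q_B _ _]; lia.
have rkX := rank_leq_row (D X 1 (q, a, t)).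
have rkY := rank_leq_row (D Y 1 (q, a, t)).
by have := E1_eq (q, a, t); rewrite /rank_gap; lia.
Qed.

Let rank_gap_line_eq0 c t k0 :
  (forall k, k != k0 -> ((k, c - k, t) == conv_deg S1) = ((k, c - k, t) == conv_deg S2)) ->
  forall k, rank_gap (k, c - k, t) = 0.
Proof.
move=> same_limit; have [B gap_supp] := rank_gap_bounded.
apply: (@eq0_of_two_step _ _ B k0) => [k lt_B_k | k ne_k_k0].
  exact: gap_supp.
by rewrite -unsh1_line rank_gap_step same_limit // subrr.
Qed.

Lemma d1_standard_S_eq : S1 = S2.
Proof.
apply/eqP; apply: contraT => ne_S12.
have ne_deg k : ((k, 0 - k, - S1) == conv_deg S2) = false.
  by rewrite !xpair_eqE andbC; apply/negbTE; apply: contra ne_S12 => /andP[/eqP]; lia.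
have gap0 k : rank_gap (k, 0 - k, - S1) = 0.
  apply: (rank_gap_line_eq0 0 (- S1) S1) => j ne_j_S1.
  by rewrite ne_deg /conv_deg !xpair_eqE (negbTE ne_j_S1).
have := rank_gap_step (S1, 0 - S1, - S1).
by rewrite unsh1_line !gap0 ne_deg /conv_deg !sub0r eqxx.
Qed.

Lemma d1_standard_rank_eq g : \rank (D X 1 g) = \rank (D Y 1 g).
Proof.
case: g => [[q a] t].
have : rank_gap (q, q + a - q, t) = 0.
  by apply: (rank_gap_line_eq0 (q + a) t 0) => k _; rewrite d1_standard_S_eq.
by rewrite /rank_gap addrAC subrr add0r => /eqP; rewrite subr_eq0 eqz_nat => /eqP.
Qed.

End Comparison.

Theorem lemma2p17 (X Y : trigraded_ss) (S1 S2 : int) :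
  HOMFLY_SS X S1 -> HOMFLY_SS Y S2 ->
  d1_standard X -> d1_standard Y ->
  (forall g, E X 1 g = E Y 1 g) ->
  S1 = S2 /\ (forall g, \rank (D X 1 g) = \rank (D Y 1 g)).
Proof.
move=> HX HY dX dY E1_eq; split; first exact: d1_standard_S_eq HX HY dX dY E1_eq.
exact: d1_standard_rank_eq HX HY dX dY E1_eq.
Qed.
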